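(* Let $k(x)$ be a polynomial with $k(x)=k(-x)=\overline{k(x)}$ for real $x$ (i.e. an even polynomial with real coefficients). For $\xi>0$ let $S_\xi$ be the operator on $L^2(0,\xi)$ given by $(S_\xi f)(x)=f(x)+\int_0^\xi f(t)k(x-t)\,dt$, and for those $\xi>0$ at which $S_\xi$ is invertible put $h_2(\xi)=(S_\xi^{-1}1)(\xi)$, where $S_\xi^{-1}1$ (a polynomial in $x$) is evaluated at $x=\xi$; equivalently $h_2(\xi)=1+\int_0^\xi\Gamma_\xi(\xi,t)\,dt$, where $\Gamma_\xi$ is the resolvent kernel, $S_\xi^{-1}f=f+\int_0^\xi\Gamma_\xi(x,t)f(t)\,dt$. Then there is a rational function $R$ with $h_2(\xi)=R(\xi)$ for all such $\xi$. Consequently the function $Q(\xi)=\frac{1}{2h_2(\xi)^2}$ is rational. *)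

From HB Require Import structures.
From mathcomp Require Import all_boot all_order all_algebra.
From mathcomp Require Import all_classical all_reals all_analysis.
Set Implicit Arguments. Unset Strict Implicit. Unset Printing Implicit Defensive.
Import Order.TTheory GRing.Theory Num.Theory.
Local Open Scope classical_set_scope.
Local Open Scope ring_scope.

Section Defs.
Variable R : realType.
Local Notation mu := (@lebesgue_measure R).

Definition I0 (xi : R) : set R := `[0, xi].

Definition L2on (xi : R) (f : R -> R) : Prop :=
  measurable_fun (I0 xi) f /\
  (\int[mu]_(x in I0 xi) ((f x) ^+ 2)%:E < +oo)%E.

Definition ae_eq_on (xi : R) (f g : R -> R) : Prop :=
  {ae mu, forall x, I0 xi x -> f x = g x}.

Definition Sop (k : {poly R}) (xi : R) (f : R -> R) (x : R) : R :=
  f x + Rintegral mu (I0 xi) (fun t => f t * k.[x - t]).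

(* S_xi is invertible on L^2(0, xi): bijective on equivalence classes *)
Definition S_invertible (k : {poly R}) (xi : R) : Prop :=
  (forall f, L2on xi f -> exists g, L2on xi g /\ ae_eq_on xi (Sop k xi g) f) /\
  (forall g1 g2, L2on xi g1 -> L2on xi g2 ->
     ae_eq_on xi (Sop k xi g1) (Sop k xi g2) -> ae_eq_on xi g1 g2).

(* If g = S_xi^{-1} 1 in L^2, then its (polynomial, continuous)
   representative is x |-> 1 - \int_0^xi g(t) k(x - t) dt; h2 is its
   value at x = xi. *)
Definition h2_of (k : {poly R}) (xi : R) (g : R -> R) : R :=
  1 - Rintegral mu (I0 xi) (fun t => g t * k.[xi - t]).

End Defs.

(* The polynomial kernel is degenerate: by Taylor's formula
   k(x - t) = sum_i a_i(t) x^i with polynomials a_i, i < size k.  Hence for a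
   solution g of S_xi g = 1 the function g(x) = 1 - sum_i m_i x^i, with moments
   m_i = int_0^xi g a_i, is a polynomial, and substituting it back shows that
   m solves the linear system m (I + A(xi)) = b(xi), where
   A(xi)_{ji} = int_0^xi t^j a_i(t) dt and b(xi)_i = int_0^xi a_i are
   polynomials in xi.  Invertibility of S_xi forces det (I + A(xi)) <> 0 (a
   nonzero kernel vector would give a polynomial annihilated by S_xi), so
   Cramer's rule writes m, and thus h2(xi) = 1 - sum_i m_i xi^i, as a ratio of
   polynomials in xi. *)

From HB Require Import structures.
From mathcomp Require Import all_boot all_order all_algebra.
From mathcomp Require Import all_classical all_reals all_analysis.
From mathcomp Require Import measurable_realfun polyrcf.
From mathcomp.algebra_tactics Require Import ring lra.
Import Order.TTheory GRing.Theory Num.Theory.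
Import numFieldNormedType.Exports.
Local Open Scope ring_scope.
Local Open Scope classical_set_scope.

Section Antiderivative.
Variable R : numFieldType.

Definition antideriv (q : {poly R}) : {poly R} :=
  \poly_(i < (size q).+1) (if i is j.+1 then q`_j / j.+1%:R else 0).

Lemma coef_antideriv q i :
  (antideriv q)`_i = if i is j.+1 then q`_j / j.+1%:R else 0.
Proof.
rewrite coef_poly; case: i => [|j] //; rewrite ltnS.
by case: ltnP => // /(nth_default 0) ->; rewrite mul0r.
Qed.

Fact antideriv_is_semilinear : semilinear antideriv.
Proof.
split=> [a p|p q]; apply/polyP => -[|i];
  by rewrite !(coefZ, coefD, coef_antideriv) ?(mulr0, addr0, mulrA, mulrDl).
Qed.
HB.instance Definition _ := GRing.isSemilinear.Build R {poly R} {poly R} _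
  antideriv antideriv_is_semilinear.

Lemma antiderivK : cancel antideriv deriv.
Proof.
move=> q; apply/polyP => i.
by rewrite coef_deriv coef_antideriv -[_ *+ i.+1]mulr_natr divfK // pnatr_eq0.
Qed.

Lemma horner0_antideriv q : (antideriv q).[0] = 0.
Proof. by rewrite horner_coef0 coef_antideriv. Qed.

End Antiderivative.
Arguments antideriv {R}.

Lemma normr_le1Dsqr (R : realDomainType) (y : R) : `|y| <= 1 + y ^+ 2.
Proof.
rewrite -[y ^+ 2]real_normK ?num_real //.
have := normr_ge0 y; have := sqr_ge0 (`|y| - 1); move=> ? ?; nra.
Qed.

Section FiniteMeasureIntegrals.
Context {d} {T : measurableType d} {R : realType}.
Context {mu : {measure set T -> \bar R}} {D : set T}.
Hypothesis mD : measurable D.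

Lemma Rintegral_sum (I : Type) (r : seq I) (F : I -> T -> R) :
  (forall i, mu.-integrable D (EFin \o F i)) ->
  Rintegral mu D (fun t => \sum_(i <- r) F i t) =
    \sum_(i <- r) Rintegral mu D (F i).
Proof.
move=> intF; elim: r => [|a r IHr].
  under eq_Rintegral do rewrite big_nil.
  by rewrite Rintegral_cst ?mul0r ?big_nil.
under eq_Rintegral do rewrite big_cons.
rewrite big_cons RintegralD ?IHr //.
apply: (eq_integrable mD _ _ _ (integrable_sum mD r (fun i _ => intF i))) => t _.
by rewrite /= sumEFin.
Qed.

Hypothesis muD : (mu D < +oo)%E.

Lemma sqr_integrable_integrable (g : T -> R) : measurable_fun D g ->
  (\int[mu]_(x in D) (g x ^+ 2)%:E < +oo)%E -> mu.-integrable D (EFin \o g).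
Proof.
move=> mg g2_fin.
have int1 : mu.-integrable D (EFin \o cst (1 : R)).
  apply: measurable_bounded_integrable => //.
  by exists 1; split; rewrite ?num_real // => M M1 x _; rewrite /= normr1 ltW.
have int_g2 : mu.-integrable D (EFin \o (fun x => g x ^+ 2)).
  apply/integrableP; split; first by apply/measurable_EFinP; exact: measurable_funM.
  by under eq_integral do rewrite /= ger0_norm ?lee_fin ?sqr_ge0 //.
apply: (le_integrable mD _ _ (integrableD mD int1 int_g2)) => [|x _ /=].
  exact/measurable_EFinP.
rewrite lee_fin [X in _ <= X]ger0_norm ?addr_ge0 ?sqr_ge0 //.
exact: normr_le1Dsqr.
Qed.

End FiniteMeasureIntegrals.

Section PolynomialsOnSegment.
Context {R : realType} {xi : R}.
Local Notation mu := (@lebesgue_measure R).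

Lemma measurable_I0 : @measurable _ (measurableTypeR R) (I0 xi).
Proof. exact: measurable_itv. Qed.

Lemma lebesgue_I0_lty : (mu (I0 xi) < +oo)%E.
Proof. exact/compact_finite_measure/segment_compact. Qed.

Lemma measurable_horner_I0 (p : {poly R}) : measurable_fun (I0 xi) (horner p).
Proof.
exact: measurable_funS (continuous_measurable_fun (@continuous_horner _ p)).
Qed.

Lemma bounded_horner_I0 (p : {poly R}) : [bounded p.[x] | x in I0 xi].
Proof.
have cp : {within I0 xi, continuous (horner p)}.
  by apply: continuous_subspaceT => x; exact: continuous_horner.
have /compact_bounded[M [_ boundM]] := continuous_compact cp (@segment_compact _ 0 xi).
by exists M; split; rewrite ?num_real // => ? ? ? ?; exact: boundM.
Qed.

Lemma integrable_horner_I0 (p : {poly R}) : mu.-integrable (I0 xi) (EFin \o horner p).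
Proof.
apply: measurable_bounded_integrable.
- exact: measurable_I0.
- exact: lebesgue_I0_lty.
- exact: measurable_horner_I0.
- exact: bounded_horner_I0.
Qed.

Lemma L2on_horner (p : {poly R}) : L2on xi (horner p).
Proof.
split; first exact: measurable_horner_I0.
under eq_integral do rewrite -horner_exp.
apply: (integrable_lty measurable_I0); exact: integrable_horner_I0.
Qed.

Lemma L2on_integrable_mulr_horner (g : R -> R) (p : {poly R}) : L2on xi g ->
  mu.-integrable (I0 xi) (EFin \o (fun t => g t * p.[t])).
Proof.
case=> mg g2_fin.
have : mu.-integrable (I0 xi) (EFin \o g).
  exact: sqr_integrable_integrable measurable_I0 lebesgue_I0_lty _ mg g2_fin.
move=> /(integrableMr measurable_I0 (measurable_horner_I0 p) (bounded_horner_I0 p)).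
move=> int_pg; apply: (eq_integrable measurable_I0 _ _ _ int_pg) => t _ /=.
by rewrite mulrC.
Qed.

Lemma Rintegral_horner (p : {poly R}) : 0 < xi ->
  Rintegral mu (I0 xi) (horner p) = (antideriv p).[xi].
Proof.
move=> xi_gt0.
rewrite /Rintegral (continuous_FTC2 (F := horner (antideriv p)) xi_gt0).
- by rewrite /= horner0_antideriv subr0.
- by apply: continuous_subspaceT => x; exact: continuous_horner.
- split=> [x _||]; first exact: derivable_horner.
    exact/cvg_at_right_filter/continuous_horner.
  exact/cvg_at_left_filter/continuous_horner.
- by move=> x _; rewrite -derivE antiderivK.
Qed.

Lemma ae_eq_on_horner_inj (p q : {poly R}) : 0 < xi ->
  ae_eq_on xi (horner p) (horner q) -> p = q.
Proof.
move=> xi_gt0 pq_ae; apply/eqP; rewrite -subr_eq0; apply/negP => /negP pq_neq0.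
(* [roots] enumerates the roots in an open interval, so take one around [0, xi]. *)
set rs := roots (p - q) (-1) (xi + 1).
have rs_negligible : mu.-negligible [set` rs].
  have rs_countable : countable [set` rs] by exact/finite_set_countable/finite_seq.
  apply/negligibleP; last exact: countable_lebesgue_measure0.
  by apply: countable_measurable => // t; exact: measurable_set1.
have : mu.-negligible (I0 xi).
  apply: negligibleS (negligibleU pq_ae rs_negligible) => x Ix.
  have [pqx|pqx] := eqVneq p.[x] q.[x]; last by left => /(_ Ix); exact/eqP.
  right; rewrite /= -(roots_on_roots _ _ pq_neq0) rootE !hornerE pqx subrr eqxx andbT.
  by move: Ix; rewrite /I0 /= !in_itv /= => /andP[? ?]; apply/andP; split; lra.
have := lebesgue_measure_itv `[0, xi]%R; rewrite /= lte_fin xi_gt0 oppr0 adde0.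
move=> mu_I0 /(negligibleP _ measurable_I0) I0_null.
have : mu (I0 xi) = 0 := I0_null.
by rewrite /I0 mu_I0 => /eqP; rewrite eqe gt_eqF.
Qed.

End PolynomialsOnSegment.

Lemma rVpolyE (R : nzSemiRingType) n (c : 'rV[R]_n) :
  rVpoly c = \sum_(j < n) c 0 j *: 'X^j.
Proof.
rewrite {1}[c]row_sum_delta linear_sum.
by apply: eq_bigr => j _; rewrite linearZ /= rVpoly_delta.
Qed.

Lemma horner_rVpoly_sum (R : comNzRingType) n (c : 'rV[R]_n) x :
  (rVpoly c).[x] = \sum_(j < n) c 0 j * x ^+ j.
Proof.
by rewrite rVpolyE horner_sum; apply: eq_bigr => j _; rewrite hornerZ hornerXn.
Qed.

Section KernelExpansion.
Variable R : comNzRingType.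

Definition kernel_coef (k : {poly R}) (i : nat) : {poly R} := k^`N(i) \Po (- 'X).

Lemma horner_sub_kernel_coef (k : {poly R}) (x t : R) :
  k.[x - t] = \sum_(i < size k) (kernel_coef k i).[t] * x ^+ i.
Proof.
rewrite addrC nderiv_taylor; last exact: mulrC.
by apply: eq_bigr => i _; rewrite horner_comp hornerN hornerX.
Qed.

End KernelExpansion.
Arguments kernel_coef {R}.

Lemma inv_double_sqr_frac (F : numFieldType) (h p q : F) :
  q != 0 -> h = p / q -> h != 0 ->
  p ^+ 2 *+ 2 != 0 /\ 1 / (2 * h ^+ 2) = q ^+ 2 / (p ^+ 2 *+ 2).
Proof.
move=> q_neq0 -> h_neq0; have p_neq0 : p != 0 by apply: contraNneq h_neq0 => ->; rewrite mul0r.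
split; first by rewrite mulrn_eq0 expf_eq0 (negbTE p_neq0).
by field; rewrite p_neq0 q_neq0.
Qed.

Section DegenerateKernel.
Context {R : realType} (k : {poly R}).
Local Notation mu := (@lebesgue_measure R).
Local Notation n := (size k).
Local Notation evmx xi := (map_mx (horner_eval xi)).

Definition moments (xi : R) (f : R -> R) : 'rV[R]_n :=
  \row_i Rintegral mu (I0 xi) (fun t => f t * (kernel_coef k i).[t]).

Lemma Rintegral_kernel xi f x : L2on xi f ->
  Rintegral mu (I0 xi) (fun t => f t * k.[x - t]) = (rVpoly (moments xi f)).[x].
Proof.
move=> f_L2; under eq_Rintegral => t _.
  rewrite horner_sub_kernel_coef mulr_sumr.
  under eq_bigr => i _ do rewrite -[x ^+ i](hornerC _ t) -hornerM.
  over.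
rewrite (Rintegral_sum measurable_I0); last by move=> i; exact: L2on_integrable_mulr_horner.
rewrite horner_rVpoly_sum; apply: eq_bigr => i _; rewrite mxE -RintegralZr.
- by apply: eq_Rintegral => t _; rewrite hornerM hornerC mulrA.
- exact: measurable_I0.
- exact: L2on_integrable_mulr_horner.
Qed.

Lemma moments_ae_eq xi f g : L2on xi f -> L2on xi g -> ae_eq_on xi f g ->
  moments xi f = moments xi g.
Proof.
move=> f_L2 g_L2 fg; apply/rowP => i; rewrite !mxE /Rintegral; congr fine.
refine (ae_eq_integral _ _ measurable_I0 _ _ _).
- exact: (measurable_int mu (L2on_integrable_mulr_horner _ _ f_L2)).
- exact: (measurable_int mu (L2on_integrable_mulr_horner _ _ g_L2)).
- have fg_ae : ae_eq mu (I0 xi) f g := fg.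
  by apply: ae_eq_comp; apply: ae_eq_mul2r.
Qed.

Definition poly_moments (p : {poly R}) : 'rV[{poly R}]_n :=
  \row_i antideriv (p * kernel_coef k i).

Lemma moments_horner xi p : 0 < xi ->
  moments xi (horner p) = evmx xi (poly_moments p).
Proof.
move=> xi_gt0; apply/rowP => i; rewrite !mxE horner_evalE -Rintegral_horner //.
by apply: eq_Rintegral => t _; rewrite -hornerM.
Qed.

Definition kernel_mx : 'M[{poly R}]_n := \matrix_(j < n) poly_moments 'X^j.

Lemma poly_moments_rVpoly xi (c : 'rV[R]_n) :
  evmx xi (poly_moments (rVpoly c)) = c *m evmx xi kernel_mx.
Proof.
apply/rowP => i; rewrite !mxE horner_evalE rVpolyE mulr_suml linear_sum horner_sum.
by apply: eq_bigr => j _; rewrite !mxE horner_evalE -scalerAl linearZ /= hornerZ.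
Qed.

Definition system_mx : 'M[{poly R}]_n := 1 + kernel_mx.

Lemma Sop_rVpoly xi (c : 'rV[R]_n) x : 0 < xi ->
  Sop k xi (horner (rVpoly c)) x = (rVpoly (c *m evmx xi system_mx)).[x].
Proof.
move=> xi_gt0; rewrite /Sop Rintegral_kernel; last exact: L2on_horner.
rewrite moments_horner // poly_moments_rVpoly.
by rewrite map_mxD map_mx1 mulmxDr mulmx1 linearD hornerD.
Qed.

Lemma det_system_mx_neq0 xi : 0 < xi -> S_invertible k xi ->
  \det (evmx xi system_mx) != 0.
Proof.
move=> xi_gt0 [_ S_inj]; apply/negP => /det0P[c c_neq0 cA0].
suff : rVpoly c = rVpoly (0 : 'rV_n).
  by move/(can_inj rVpolyK)/eqP; rewrite (negbTE c_neq0).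
apply: (ae_eq_on_horner_inj _ _ xi_gt0); apply: S_inj; try exact: L2on_horner.
by apply: aeW => x _; rewrite !Sop_rVpoly // cA0 mul0mx.
Qed.

Lemma moments_solution xi g : 0 < xi -> L2on xi g ->
  ae_eq_on xi (Sop k xi g) (fun=> 1) ->
  moments xi g *m evmx xi system_mx = evmx xi (poly_moments 1).
Proof.
move=> xi_gt0 g_L2 Sg1; set m := moments xi g.
have g_poly : ae_eq_on xi g (horner (1 - rVpoly m)).
  move: Sg1; apply: filterS; first exact: (ae_filter_ringOfSetsType mu).
  move=> x + Ix => /(_ Ix); rewrite /Sop Rintegral_kernel // hornerD hornerN hornerC => <-.
  by rewrite addrK.
have : m = moments xi (horner (1 - rVpoly m)).
  by apply: moments_ae_eq => //; exact: L2on_horner.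
rewrite moments_horner //.
have -> : poly_moments (1 - rVpoly m) = poly_moments 1 - poly_moments (rVpoly m).
  by apply/rowP => i; rewrite !mxE mulrBl linearB.
rewrite map_mxB poly_moments_rVpoly => m_eq.
by rewrite map_mxD map_mx1 mulmxDr mulmx1 {1}m_eq subrK.
Qed.

Definition h2_den : {poly R} := \det system_mx.

Definition h2_num : {poly R} :=
  h2_den - \sum_(i < n) (poly_moments 1 *m \adj system_mx) 0 i * 'X^i.

Lemma h2_rational xi g : 0 < xi -> S_invertible k xi -> L2on xi g ->
  ae_eq_on xi (Sop k xi g) (fun=> 1) ->
  h2_den.[xi] != 0 /\ h2_of k xi g = h2_num.[xi] / h2_den.[xi].
Proof.
move=> xi_gt0 S_inv g_L2 Sg1.
have det_xi : \det (evmx xi system_mx) = h2_den.[xi] by rewrite det_map_mx.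
have den_neq0 : h2_den.[xi] != 0 by rewrite -det_xi det_system_mx_neq0.
split=> //.
have unit_xi : evmx xi system_mx \in unitmx by rewrite unitmxE unitfE det_xi.
have m_eq : moments xi g = h2_den.[xi]^-1 *: evmx xi (poly_moments 1 *m \adj system_mx).
  rewrite -(mulmxK unit_xi (moments xi g)) moments_solution //.
  by rewrite /invmx unit_xi det_xi -scalemxAr map_mxM map_mx_adj.
rewrite /h2_of Rintegral_kernel // m_eq horner_rVpoly_sum.
rewrite /h2_num hornerD hornerN [(\sum_(i < n) _ * 'X^i).[xi]]horner_sum.
rewrite mulrBl divff //; congr (1 - _).
rewrite mulr_suml; apply: eq_bigr => i _.
by rewrite !mxE hornerM hornerXn horner_evalE; ring.
Qed.

End DegenerateKernel.

Theorem theorem8p1 (R : realType) (k : {poly R})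
    (k_even : forall x : R, k.[- x] = k.[x]) :
  (exists p q : {poly R},
     forall (xi : R), 0 < xi -> S_invertible k xi ->
     forall g : R -> R, L2on xi g -> ae_eq_on xi (Sop k xi g) (fun _ => 1) ->
       q.[xi] != 0 /\ h2_of k xi g = p.[xi] / q.[xi])
  /\
  (exists p q : {poly R},
     forall (xi : R), 0 < xi -> S_invertible k xi ->
     forall g : R -> R, L2on xi g -> ae_eq_on xi (Sop k xi g) (fun _ => 1) ->
       h2_of k xi g != 0 ->
       q.[xi] != 0 /\ 1 / (2 * (h2_of k xi g) ^+ 2) = p.[xi] / q.[xi]).
Proof.
split; first by exists (h2_num k), (h2_den k) => xi *; exact: h2_rational.
exists (h2_den k ^+ 2), (h2_num k ^+ 2 *+ 2) => xi xi_gt0 S_inv g g_L2 Sg1 h2_neq0.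
have [den_neq0 h2E] := h2_rational k xi g xi_gt0 S_inv g_L2 Sg1.
by rewrite hornerMn !horner_exp; exact: inv_double_sqr_frac.
Qed.
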